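(* Let $A\in\mathbb{R}^{n\times n}$ be Hurwitz, $B\in\mathbb{R}^{n\times 1}$, $C\in\mathbb{R}^{1\times n}$, and for $p_1>0$ define $$f(p_1)=2\,C(p_1I-A)^{-1}\big(p_1BB^T\big)(p_1I-A)^{-T}C^T .$$ Define $T_2=-C$, $T_4=A^{-1}$, $T_6=A^{-1}BB^TA^{-T}$, $T_3=T_6C^T$, $T_5=-(T_6T_4^T+T_4T_6^T)$. Suppose $\gamma\in\mathbb{R}$ and $S\in\mathbb{R}^{n\times n}$ satisfy the linear matrix inequalities $$S+S^T\succeq 0,\qquad L:=\begin{bmatrix}\gamma^2 & T_3^T-T_2S^T\\ T_3-ST_2^T & -ST_4^T-T_4S^T+T_5\end{bmatrix}\succeq 0 .$$ Then $\gamma^2\ge f(p_1)$ for all $p_1>0$. Consequently, an upper bound on $\sup_{p_1>0}f(p_1)$ is obtained by minimizing $\gamma^2$ over $(\gamma,S)$ subject to these LMIs.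
   Context: $A$ Hurwitz means all eigenvalues of $A$ have negative real part (so $A$ is invertible and $p_1I-A$ is invertible for $p_1>0$). $X\succeq 0$ means $X$ is symmetric positive semidefinite; $X^{-T}=(X^{-1})^T$. Interpretation: $f(p_1)$ equals the squared $\mathcal{H}_2$ norm of the first-order model $G_1(s)=b_1/(s+p_1)$ with $b_1=2p_1C(p_1I-A)^{-1}B$, i.e. the first-order model with pole $-p_1$ interpolating $G(s)=C(sI-A)^{-1}B$ at $s=p_1$. *)

From HB Require Import structures.
From mathcomp Require Import all_boot all_order all_algebra.
From mathcomp Require Import complex.
From mathcomp Require Import reals.
Set Implicit Arguments. Unset Strict Implicit. Unset Printing Implicit Defensive.
Import Order.TTheory GRing.Theory Num.Theory.
Local Open Scope ring_scope.

Definition hurwitz (R : realType) (n : nat) (A : 'M[R]_n) : Prop :=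
  forall z : R[i], eigenvalue (map_mx (fun x : R => (x%:C)%C) A) z -> complex.Re z < 0.

Definition psd (R : realType) (m : nat) (X : 'M[R]_m) : Prop :=
  X^T = X /\ forall x : 'cV[R]_m, 0 <= (x^T *m X *m x) 0 0.

Definition fH2 (R : realType) (n : nat) (A : 'M[R]_n) (B : 'cV[R]_n) (C : 'rV[R]_n)
    (p1 : R) : R :=
  2 * (C *m invmx (p1%:M - A) *m (p1 *: (B *m B^T)) *m (invmx (p1%:M - A))^T *m C^T) 0 0.

Section Ts.
Variables (R : realType) (n : nat) (A : 'M[R]_n) (B : 'cV[R]_n) (C : 'rV[R]_n).
Definition T2 : 'rV[R]_n := - C.
Definition T4 : 'M[R]_n := invmx A.
Definition T6 : 'M[R]_n := invmx A *m (B *m B^T) *m (invmx A)^T.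
Definition T3 : 'cV[R]_n := T6 *m C^T.
Definition T5 : 'M[R]_n := - (T6 *m T4^T + T4 *m T6^T).
Definition Lmat (gamma : R) (S : 'M[R]_n) : 'M[R]_(1 + n) :=
  block_mx (gamma ^+ 2)%:M (T3^T - T2 *m S^T)
           (T3 - S *m T2^T) (- (S *m T4^T) - T4 *m S^T + T5).
End Ts.

From HB Require Import structures.
From mathcomp Require Import all_boot all_order all_algebra.
From mathcomp Require Import complex reals.
From mathcomp Require Import ring lra.
Import Order.TTheory GRing.Theory Num.Theory.
Set Implicit Arguments. Unset Strict Implicit. Unset Printing Implicit Defensive.
Local Open Scope ring_scope.

(* Test the LMI L >= 0 on the vector v = [1; y^T] with y = p C (pI - A)^-1 A.
   This y satisfies y A^-1 = p C (pI - A)^-1 = C + y / p, so A^-T y^T - C^T =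
   y^T / p and the cross terms of L (built from T3 = T6 C^T and
   T5 = -(T6 A^-T + A^-1 T6)) collapse: v^T L v = gamma^2 - (2/p) y S y^T
   - (2/p) y T6 y^T, where y T6 y^T = |y A^-1 B|^2 = (p/2) f(p).  As
   y S y^T = y (S + S^T) y^T / 2 >= 0, this gives gamma^2 >= f(p).  The
   Hurwitz hypothesis makes A and pI - A invertible: neither 0 nor p is an
   eigenvalue. *)

Section Hurwitz.
Variables (R : realType) (n : nat) (A : 'M[R]_n).
Hypothesis A_hurwitz : hurwitz A.

Lemma hurwitz_eigenvalue_lt0 (a : R) : eigenvalue A a -> a < 0.
Proof. by rewrite -(eigenvalue_map (real_complex R)) => /A_hurwitz. Qed.

Lemma hurwitz_unitmx_scalar_subr (a : R) : 0 <= a -> a%:M - A \in unitmx.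
Proof.
move=> a_ge0; rewrite unitmxE unitfE; apply/det0P => -[v v_neq0 /eqP].
rewrite mulmxBr mul_mx_scalar subr_eq0 => /eqP vA.
suff : a < 0 by rewrite ltNge a_ge0.
by apply: hurwitz_eigenvalue_lt0; apply/eigenvalueP; exists v.
Qed.

Lemma hurwitz_unitmx : A \in unitmx.
Proof.
rewrite unitmxE unitfE; apply/det0P => -[v v_neq0 vA].
suff : (0 : R) < 0 by rewrite ltxx.
by apply: hurwitz_eigenvalue_lt0; apply/eigenvalueP; exists v; rewrite // vA scale0r.
Qed.
End Hurwitz.

Lemma trmx_mx11 (R : nzRingType) (u : 'M[R]_1) : u^T = u.
Proof. by apply/matrixP => i j; rewrite !ord1 mxE. Qed.

Section LMI.
Variables (R : realType) (n : nat) (A : 'M[R]_n) (B : 'cV[R]_n) (C : 'rV[R]_n).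
Variables (gamma : R) (S : 'M[R]_n).

Lemma psd_addtr_quad_ge0 (y : 'rV[R]_n) :
  psd (S + S^T) -> 0 <= (y *m S *m y^T) 0 0.
Proof.
case=> _ /(_ y^T); rewrite trmxK mulmxDr mulmxDl -[y *m S^T *m y^T]trmx_mx11.
by rewrite !trmx_mul !trmxK mulmxA mxE -mulr2n pmulrn_lge0.
Qed.

Lemma quad_T6 (y : 'rV[R]_n) :
  y *m T6 A B *m y^T = (y *m invmx A *m B) *m (y *m invmx A *m B)^T.
Proof. by rewrite /T6 !trmx_mul !mulmxA. Qed.

Lemma Lmat_quad (y : 'rV[R]_n) :
  (col_mx 1%:M y^T)^T *m Lmat A B C gamma S *m col_mx 1%:M y^T =
  (gamma ^+ 2)%:M + 2 *: (y *m (S + T6 A B) *m (C^T - (T4 A)^T *m y^T)).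
Proof.
rewrite /Lmat tr_col_mx trmxK tr_scalar_mx mul_row_block mul_row_col.
rewrite !mul1mx mulmx1 /T5 /T3 /T2 -addrA; congr (_ + _).
set T4A := T4 A; set T6A := T6 A B; clearbody T4A T6A.
have cross_tr :
    ((T6A *m C^T)^T - - C *m S^T) *m y^T = y *m (T6A *m C^T - S *m (- C)^T).
  by rewrite -[LHS]trmx_mx11 trmx_mul !linearB /= !trmx_mul !trmxK.
have quad_tr (M N : 'M_n) : y *m M *m N^T *m y^T = y *m N *m M^T *m y^T.
  by rewrite -[LHS]trmx_mx11 !trmx_mul !trmxK !mulmxA.
rewrite mulmxDl cross_tr.
rewrite !(linearN, mulmxN, mulNmx, opprK, mulmxDl, mulmxDr, mulmxBl, mulmxBr) /=.
rewrite !(mulmxDl, mulmxDr) !mulmxA (quad_tr T4A S) (quad_tr T4A T6A).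
move: (y *m T6A *m C^T) (y *m S *m C^T) => a b.
move: (y *m S *m T4A^T *m y^T) (y *m T6A *m T4A^T *m y^T) => c d.
by apply/matrixP => i j; rewrite !mxE; ring.
Qed.
End LMI.

Section Interpolation.
Variables (R : realType) (n : nat) (A : 'M[R]_n) (B : 'cV[R]_n) (C : 'rV[R]_n).
Variables (p : R) (gamma : R) (S : 'M[R]_n).
Hypotheses (A_unit : A \in unitmx) (pA_unit : p%:M - A \in unitmx) (p_neq0 : p != 0).

Let x := p *: (C *m invmx (p%:M - A)).
Let y := x *m A.

Lemma interp_row_shiftE : x = C + p^-1 *: y.
Proof.
have xpA : x *m (p%:M - A) = p *: C by rewrite -scalemxAl mulmxKV.
apply: (scalerI p_neq0); rewrite scalerDr (scalerA p p^-1) mulfV // scale1r.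
by apply/eqP; rewrite -subr_eq -xpA mulmxBr mul_mx_scalar.
Qed.

Lemma fH2_interp : fH2 A B C p = 2 / p * ((x *m B) *m (x *m B)^T) 0 0.
Proof.
rewrite /fH2 /x -scalemxAr -!scalemxAl linearZ /= -scalemxAr scalerA.
rewrite !trmx_mul !mulmxA; move: (_ *m C^T) => Q.
by rewrite !mxE; field.
Qed.

Lemma Lmat_quad_interp :
  (col_mx 1%:M y^T)^T *m Lmat A B C gamma S *m col_mx 1%:M y^T =
  (gamma ^+ 2 - fH2 A B C p)%:M - (2 / p) *: (y *m S *m y^T).
Proof.
have yA : y *m invmx A = x by rewrite mulmxK.
have shift : C^T - (T4 A)^T *m y^T = - p^-1 *: y^T.
  by rewrite -trmx_mul yA {1}interp_row_shiftE linearD linearZ /= opprD addNKr scaleNr.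
rewrite Lmat_quad shift -scalemxAr mulmxDr mulmxDl quad_T6 yA fH2_interp.
move: (y *m S *m y^T) ((x *m B) *m (x *m B)^T) => s q.
by apply/matrixP => i j; rewrite !ord1 !mxE eqxx !mulr1n; field.
Qed.

End Interpolation.

Theorem proposition1 (R : realType) (n : nat) (A : 'M[R]_n) (B : 'cV[R]_n)
    (C : 'rV[R]_n) (gamma : R) (S : 'M[R]_n) :
  hurwitz A ->
  psd (S + S^T) ->
  psd (Lmat A B C gamma S) ->
  forall p1 : R, 0 < p1 -> fH2 A B C p1 <= gamma ^+ 2.
Proof.
move=> A_hurwitz S_psd [_ L_psd] p p_gt0.
have A_unit := hurwitz_unitmx A_hurwitz.
have pA_unit := hurwitz_unitmx_scalar_subr A_hurwitz (ltW p_gt0).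
set y := p *: (C *m invmx (p%:M - A)) *m A.
have := L_psd (col_mx 1%:M y^T); rewrite Lmat_quad_interp ?lt0r_neq0 //.
have := psd_addtr_quad_ge0 y S_psd; move: (y *m S *m y^T) => s s_ge0.
have : 0 <= 2 / p * s 0 0 by rewrite mulr_ge0 // divr_ge0 // ltW.
rewrite !mxE eqxx mulr1n; lra.
Qed.
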